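(* Let $n,m\ge1$, let $V'$ and $W'$ be complex Hilbert spaces with $\dim V'=n$ and $\dim W'=m$, let $\varepsilon\in\{0,1\}$, and let $R\in End\big((V'\otimes W')^{\otimes 2}\big)$ be defined by $$R(v\otimes w\otimes v'\otimes w')=(-1)^\varepsilon\, v'\otimes w\otimes v\otimes w'\qquad(v,v'\in V',\ w,w'\in W').$$ Then $R$ is an $R$-matrix, and its Thoma parameters are $\alpha_1=\dots=\alpha_n=\frac1n$ (all other $\alpha_i=0$), $\beta=0$ if $\varepsilon=0$; and $\alpha=0$, $\beta_1=\dots=\beta_n=\frac1n$ (all other $\beta_i=0$) if $\varepsilon=1$.
   Context: For a finite-dimensional Hilbert space $E$ of dimension $D$, an $R$-matrix is $R\in End(E\otimes E)$ with $R^2=1$ and $(R\otimes1)(1\otimes R)(R\otimes1)=(1\otimes R)(R\otimes1)(1\otimes R)$. Its Yang-Baxter representation $\rho_R$ of $\mathfrak{S}_\infty$ sends $\sigma_i=(i\ i{+}1)$ to $1^{\otimes i-1}\otimes R\otimes1\otimes\cdots\in\bigotimes_{k\ge1}End(E)$, and its Yang-Baxter character is $\chi_R=\tau\circ\rho_R$ with $\tau=\bigotimes_{k\ge1}\frac{\mathrm{Tr}}{D}$. Extremal characters of $\mathfrak{S}_\infty$ are in bijection (Thoma) with pairs of nonincreasing nonnegative sequences $(\alpha,\beta)$ with $\sum_i\alpha_i+\beta_i\le1$, via $\chi(c_k)=\sum_i\alpha_i^k+(-1)^{k-1}\beta_i^k$ for $k\ge2$, where $c_k=(1\,2\,\cdots\,k)$;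 the Thoma parameters of $R$ are the pair $(\alpha,\beta)$ corresponding to $\chi_R$. *)

(* Scalars: algC (algebraic complex numbers); all operators
   involved have integer entries. *)
From mathcomp Require Import all_boot all_order all_algebra all_fingroup algC.
Set Implicit Arguments. Unset Strict Implicit. Unset Printing Implicit Defensive.
Import GRing.Theory Num.Theory.
Local Open Scope ring_scope.

(* Operators on the Hilbert space with orthonormal basis indexed by the
   finite type T: A x y = <x| A |y>. *)
Definition op (T : finType) := T -> T -> algC.
Definition mulop (T : finType) (A B : op T) : op T :=
  fun x y => \sum_(z : T) A x z * B z y.
Definition idop (T : finType) : op T := fun x y => (x == y)%:R.
Definition trop (T : finType) (A : op T) : algC := \sum_(x : T) A x x.

(* Basis of E^{(x) N} : configurations 'I_N -> E (sites numbered from 0). *)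
Definition config (E : finType) (N : nat) := {ffun 'I_N -> E}.

(* generator i : 'I_N' of S_{N'.+1} is the transposition of sites i, i+1 *)
Definition site0 (N' : nat) (i : 'I_N') : 'I_N'.+1 := widen_ord (leqnSn N') i.
Definition site1 (N' : nat) (i : 'I_N') : 'I_N'.+1 := lift ord0 i.

(* 1^{(x) i} (x) R (x) 1 ... acting on E^{(x) N'.+1} *)
Definition local_op (E : finType) (N' : nat) (R : op (E * E)%type) (i : 'I_N')
  : op (config E N'.+1) :=
  fun x y => R (x (site0 i), x (site1 i)) (y (site0 i), y (site1 i)) *
    [forall j, ((j != site0 i) && (j != site1 i)) ==> (x j == y j)]%:R.

Definition is_Rmatrix (E : finType) (R : op (E * E)%type) : Prop :=
  (forall x y, mulop R R x y = idop x y) /\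
  (forall x y : config E 3,
     mulop (mulop (local_op R (@ord0 1)) (local_op R (@ord_max 1)))
           (local_op R (@ord0 1)) x y =
     mulop (mulop (local_op R (@ord_max 1)) (local_op R (@ord0 1)))
           (local_op R (@ord_max 1)) x y).

Definition rho (E : finType) (N' : nat) (R : op (E * E)%type) (w : seq 'I_N')
  : op (config E N'.+1) :=
  foldr (fun i A => mulop (local_op R i) A) (@idop _) w.

Definition word_perm (N' : nat) (w : seq 'I_N') : {perm 'I_N'.+1} :=
  \prod_(i <- w) tperm (site0 i) (site1 i).

(* chi_R = tau o rho_R, tau = (x)_k Tr/D ; on S_{N'.+1} only N'.+1 sites matter *)
Definition YBchar (E : finType) (N' : nat) (R : op (E * E)%type) (w : seq 'I_N')
  : algC :=
  (#|E|%:R ^+ N'.+1)^-1 * trop (rho R w).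

(* Thoma's formula for (finitely supported) parameters alpha, beta:
   chi(c_k) = sum alpha_i^k + (-1)^(k-1) sum beta_i^k for k >= 2,
   extended multiplicatively over the cycles of a permutation. *)
Definition thoma_p (a b : seq algC) (k : nat) : algC :=
  if (k <= 1)%N then 1
  else \sum_(x <- a) x ^+ k + (-1) ^+ k.-1 * \sum_(x <- b) x ^+ k.

Definition thoma_char (a b : seq algC) (N : nat) (s : {perm 'I_N}) : algC :=
  \prod_(C in porbits s) thoma_p a b #|C|.

(* The R-matrix of the statement on E = V' (x) W', V' = C^n, W' = C^m:
   R (v(x)w(x)v'(x)w') = (-1)^eps v'(x)w(x)v(x)w'. *)
Definition Espace (n m : nat) : finType := ('I_n * 'I_m)%type.
Definition Rmat (n m : nat) (eps : bool) : op (Espace n m * Espace n m)%type :=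
  fun x y => (-1) ^+ eps *
    ((x.1.1 == y.2.1) && (x.1.2 == y.1.2) && (x.2.1 == y.1.1) && (x.2.2 == y.2.2))%:R.
Arguments Rmat n m eps : clear implicits.

From mathcomp Require Import all_boot all_order all_algebra all_fingroup algC.
Set Implicit Arguments. Unset Strict Implicit. Unset Printing Implicit Defensive.
Import GRing.Theory Num.Theory.
Local Open Scope ring_scope.

(* On the basis of (V' (x) W')^{(x) N}, R is (-1)^eps times the operator that
   exchanges the V'-labels of two neighbouring sites, so a word w for a
   permutation s is represented by (-1)^(eps |w|) P_s, where P_s permutes the
   V'-labels by s and keeps the W'-labels.  The trace of P_s counts the
   configurations whose V'-labels are constant on the cycles of s, that is
   n^c m^N for c cycles, and |w| has the parity of s, i.e. of N - c.  Hence
   chi_R(s) = ((-1)^eps / n)^(N - c), the product over the cycles of s of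
   ((-1)^eps / n)^(k - 1) for a k-cycle, which is Thoma's formula for the
   stated parameters. *)

Section PermutationLength.
Variables (T : finType) (s : {perm T}).

Definition tperm_length : nat := \sum_(C in porbits s) #|C|.-1.

Lemma sum_card_porbits : (\sum_(C in porbits s) #|C|)%N = #|T|.
Proof.
have actsT : [acts <[s]>%g, on [set: T] | 'P].
  by apply/actsP => a _ x; rewrite !inE.
have := card_partition (orbit_partition actsT).
rewrite cardsT /porbits porbitE => ->.
by apply: eq_bigl => C; apply/imsetP/imsetP => -[x _ ->]; exists x.
Qed.

Lemma porbit_in_porbits x : porbit s x \in porbits s.
Proof. exact: imset_f. Qed.

Lemma card_porbits_gt0 C : C \in porbits s -> (0 < #|C|)%N.
Proof. by case/imsetP=> x _ ->; rewrite lt0n card_porbit_neq0. Qed.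

Lemma tperm_length_add_card_porbits : (tperm_length + #|porbits s|)%N = #|T|.
Proof.
rewrite -sum1_card -big_split -sum_card_porbits /=.
by apply: eq_bigr => C /card_porbits_gt0; rewrite addn1 => /prednK.
Qed.

Lemma odd_perm_tperm_length : odd_perm s = odd tperm_length.
Proof. by rewrite /odd_perm -tperm_length_add_card_porbits oddD addbK. Qed.

End PermutationLength.

Lemma sum_delta_mul (R : pzSemiRingType) (T : finType) (f : T -> T) x y :
  \sum_(z : T) (x == f z)%:R * (z == y)%:R = (x == f y)%:R :> R.
Proof.
rewrite (bigD1 y) //= eqxx mulr1 big1 ?addr0 // => z /negbTE ->.
by rewrite mulr0.
Qed.

Section PermuteFst.
Variables (A B : finType).
Local Notation E := (A * B)%type.

Definition permute_fst N (s : {perm 'I_N}) (y : config E N) : config E N :=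
  [ffun j => ((y (s j)).1, (y j).2)].

Definition perm_op N (s : {perm 'I_N}) : op (config E N) :=
  fun x y => (x == permute_fst s y)%:R.

Lemma permute_fst1 N (y : config E N) : permute_fst 1 y = y.
Proof. by apply/ffunP => j; rewrite ffunE perm1; case: (y j). Qed.

Lemma permute_fstM N (s t : {perm 'I_N}) y :
  permute_fst s (permute_fst t y) = permute_fst (s * t) y.
Proof. by apply/ffunP => j; rewrite !ffunE permM. Qed.

Lemma mulop_scaled_perm_op N (P Q : op (config E N)) c d s t :
  (forall x y, P x y = c * perm_op s x y) ->
  (forall x y, Q x y = d * perm_op t x y) ->
  forall x y, mulop P Q x y = c * d * perm_op (s * t) x y.
Proof.
move=> PE QE x y; rewrite /mulop.
under eq_bigr => z _ do rewrite PE QE mulrACA.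
by rewrite -mulr_sumr sum_delta_mul permute_fstM.
Qed.

Section FixedConfigurations.
Variables (N : nat) (s : {perm 'I_N}).

Definition cycle_of (j : 'I_N) : {C | C \in porbits s} :=
  exist _ (porbit s j) (porbit_in_porbits s j).

Lemma cycle_of_codom C : C \in codom cycle_of.
Proof.
case: C => C sC; have /imsetP[j _ defC] := sC; apply/codomP; exists j.
by apply/val_inj; rewrite /= defC.
Qed.

Definition cycle_rep C : 'I_N := iinv (cycle_of_codom C).

Lemma cycle_of_permX k j : cycle_of ((s ^+ k)%g j) = cycle_of j.
Proof. by apply/val_inj; rewrite /= porbit_perm. Qed.

Lemma cycle_repP j : exists k, cycle_rep (cycle_of j) = (s ^+ k)%g j.
Proof.
apply/porbitP; rewrite -eq_porbit_mem; apply/eqP.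
exact: (congr1 val (f_iinv (cycle_of_codom (cycle_of j)))).
Qed.

Definition config_of_labels
    (p : {ffun {C | C \in porbits s} -> A} * {ffun 'I_N -> B}) : config E N :=
  [ffun j => (p.1 (cycle_of j), p.2 j)].

Lemma config_of_labels_inj : injective config_of_labels.
Proof.
move=> [g h] [g' h'] /ffunP eq_gh; congr pair; apply/ffunP.
  move=> C; rewrite -(f_iinv (cycle_of_codom C)).
  by have := eq_gh (cycle_rep C); rewrite !ffunE => -[].
by move=> j; have := eq_gh j; rewrite !ffunE => -[].
Qed.

Lemma permute_fst_fixedX (x : config E N) k j :
  x = permute_fst s x -> (x ((s ^+ k)%g j)).1 = (x j).1.
Proof.
move=> fix_x; elim: k j => [|k IHk] j; first by rewrite expg0 perm1.
by rewrite expgSr permM -(IHk j) {2}fix_x ffunE.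
Qed.

Lemma permute_fst_fixedE x :
  (x == permute_fst s x) = (x \in codom config_of_labels).
Proof.
apply/eqP/codomP => [fix_x | [[g h] ->]].
  exists ([ffun C => (x (cycle_rep C)).1], [ffun j => (x j).2]).
  apply/ffunP => j; rewrite !ffunE /=.
  have [k ->] := cycle_repP j.
  by rewrite permute_fst_fixedX //; case: (x j).
apply/ffunP => j; rewrite !ffunE /=.
by rewrite -[s j]/((s ^+ 1)%g j) cycle_of_permX.
Qed.

Lemma card_permute_fst_fixed :
  #|[pred x | x == permute_fst s x]| = (#|A| ^ #|porbits s| * #|B| ^ N)%N.
Proof.
rewrite (eq_card permute_fst_fixedE) card_codom; last exact: config_of_labels_inj.
by rewrite card_prod !card_ffun card_sig card_ord.
Qed.

End FixedConfigurations.

Lemma trop_perm_op N (s : {perm 'I_N}) :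
  trop (perm_op s) = (#|A| ^ #|porbits s| * #|B| ^ N)%:R.
Proof.
rewrite -card_permute_fst_fixed -sum1_card natr_sum [RHS]big_mkcond /=.
by apply: eq_bigr => x _; rewrite /perm_op inE; case: eqP.
Qed.

End PermuteFst.

Lemma site0_neq_site1 N' (i : 'I_N') : site0 i != site1 i.
Proof. by rewrite -val_eqE /= /bump leq0n add1n neq_ltn ltnSn. Qed.

Lemma odd_perm_word_perm N' (w : seq 'I_N') :
  odd_perm (word_perm w) = odd (size w).
Proof.
elim: w => [|i w IHw]; first by rewrite /word_perm big_nil odd_perm1.
by rewrite /word_perm big_cons odd_mul_tperm site0_neq_site1 -/(word_perm w) IHw.
Qed.

Lemma braid_tperm_site :
  let t0 := tperm (site0 (@ord0 1)) (site1 (@ord0 1)) in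
  let t1 := tperm (site0 (@ord_max 1)) (site1 (@ord_max 1)) in
  (t0 * t1 * t0 = t1 * t0 * t1)%g.
Proof.
move=> t0 t1; apply/permP => j; rewrite !permM /t0 /t1.
by case: j => [[|[|[|k]]] lt_j3] //; apply/val_inj; rewrite /= !permE.
Qed.

Section Rmat.
Variables (n m : nat) (eps : bool).
Local Notation R := (Rmat n m eps).

Lemma RmatE x y :
  R x y = (-1) ^+ eps * (x == ((y.2.1, y.1.2), (y.1.1, y.2.2)))%:R.
Proof.
congr (_ * _%:R); case: x => [[a b] [c d]]; case: y => [[a' b'] [c' d']] /=.
by rewrite !xpair_eqE !andbA.
Qed.

Lemma Rmat_involutive x y : mulop R R x y = idop x y.
Proof.
rewrite /mulop; under eq_bigr => z _ do rewrite !RmatE mulrACA.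
pose swap_fst (z : Espace n m * Espace n m) := (z.2.1, z.1.2, (z.1.1, z.2.2)).
rewrite -mulr_sumr (sum_delta_mul _ swap_fst) -expr2 sqrr_sign mul1r.
by case: y => [[a b] [c d]].
Qed.

Lemma local_op_Rmat N' (i : 'I_N') x y :
  local_op R i x y = (-1) ^+ eps * perm_op (tperm (site0 i) (site1 i)) x y.
Proof.
rewrite /local_op RmatE /perm_op -mulrA -natrM -mulnb; congr (_ * _%:R).
set a := site0 i; set b := site1 i; rewrite /= !mulnb; congr (nat_of_bool _).
apply/andP/eqP => [[/andP[/eqP xa /eqP xb] /forallP x_off] | ->].
  apply/ffunP => j; rewrite ffunE.
  have [->|ja] := eqVneq j a; first by rewrite tpermL xa.
  have [->|jb] := eqVneq j b; first by rewrite tpermR xb.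
  move: (x_off j); rewrite ja jb => /eqP ->.
  by rewrite tpermD 1?eq_sym //; case: (y j).
rewrite !ffunE tpermL tpermR !eqxx; split => //.
apply/forallP => j; apply/implyP => /andP[ja jb].
by rewrite ffunE tpermD 1?eq_sym //; case: (y j).
Qed.

Lemma Rmat_braid (x y : config (Espace n m) 3) :
  mulop (mulop (local_op R (@ord0 1)) (local_op R (@ord_max 1)))
        (local_op R (@ord0 1)) x y =
  mulop (mulop (local_op R (@ord_max 1)) (local_op R (@ord0 1)))
        (local_op R (@ord_max 1)) x y.
Proof.
have local_op3 := mulop_scaled_perm_op
  (mulop_scaled_perm_op (local_op_Rmat _) (local_op_Rmat _)) (local_op_Rmat _).
by rewrite !local_op3 braid_tperm_site.
Qed.

Lemma is_Rmatrix_Rmat : is_Rmatrix R.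
Proof. by split; [apply: Rmat_involutive | apply: Rmat_braid]. Qed.

Lemma rho_Rmat N' (w : seq 'I_N') x y :
  rho R w x y = (-1) ^+ (eps * size w) * perm_op (word_perm w) x y.
Proof.
elim: w x y => [|i w IHw] x y.
  by rewrite /rho /word_perm big_nil muln0 mul1r /perm_op permute_fst1.
rewrite /rho /= -/(rho R w) (mulop_scaled_perm_op (local_op_Rmat i) IHw).
by rewrite /word_perm big_cons -exprD mulnS.
Qed.

End Rmat.

Section ThomaParameters.
Variables (n : nat) (eps : bool).
Hypothesis n_gt0 : (0 < n)%N.
Local Notation alpha := (if eps then [::] else nseq n n%:R^-1).
Local Notation beta := (if eps then nseq n n%:R^-1 else [::]).

Lemma thoma_p_nseq k : (0 < k)%N ->
  thoma_p alpha beta k = ((-1) ^+ eps / n%:R) ^+ k.-1.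
Proof.
case: k => [|[|k]] // _; rewrite /thoma_p /=.
have n_neq0 : n%:R != 0 :> algC by rewrite pnatr_eq0 -lt0n.
have sum_inv : n%:R^-1 ^+ k.+2 *+ n = n%:R^-1 ^+ k.+1 :> algC.
  by rewrite exprS mulrC -mulr_natr -mulrA mulVf ?mulr1.
by case: eps; rewrite !big_nil !big_nseq !iter_addr_0 sum_inv exprMn
  ?(mulr0, addr0, add0r, expr1n, mul1r).
Qed.

Lemma thoma_char_nseq N (s : {perm 'I_N}) :
  thoma_char alpha beta s = ((-1) ^+ eps / n%:R) ^+ tperm_length s.
Proof.
rewrite /thoma_char (eq_bigr _ (fun C sC => thoma_p_nseq (card_porbits_gt0 sC))).
by rewrite prodrXr.
Qed.

End ThomaParameters.

Lemma YBchar_Rmat n m eps N' (w : seq 'I_N') :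
  YBchar (Rmat n m eps) w = (-1) ^+ (eps * size w) *
    ((n ^ #|porbits (word_perm w)| * m ^ N'.+1)%:R / (n * m)%:R ^+ N'.+1).
Proof.
rewrite /YBchar /trop; under eq_bigr do rewrite rho_Rmat.
rewrite -mulr_sumr mulrCA; congr (_ * _).
by rewrite mulrC -[\sum_x _]/(trop _) trop_perm_op card_prod !card_ord.
Qed.

Lemma scaled_ratio_exprD (F : fieldType) (z a b : F) d c : a != 0 -> b != 0 ->
  z ^+ d * (a ^+ c * b ^+ (d + c) / (a * b) ^+ (d + c)) = (z / a) ^+ d.
Proof.
move=> a_neq0 b_neq0.
rewrite exprMn invfM mulrACA (divff (expf_neq0 _ b_neq0)) mulr1.
rewrite exprD invfM [a ^+ c * _]mulrCA (divff (expf_neq0 _ a_neq0)) mulr1.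
by rewrite exprMn exprVn.
Qed.

Theorem mainTheorem2 (n m : nat) (eps : bool) :
  (0 < n)%N -> (0 < m)%N ->
  is_Rmatrix (Rmat n m eps) /\
  (forall (N' : nat) (w : seq 'I_N'),
     YBchar (Rmat n m eps) w =
     thoma_char (if eps then [::] else nseq n (n%:R^-1))
                (if eps then nseq n (n%:R^-1) else [::])
                (word_perm w)).
Proof.
move=> n_gt0 m_gt0; split; first exact: is_Rmatrix_Rmat.
move=> N' w; rewrite YBchar_Rmat thoma_char_nseq //.
have sign : (-1) ^+ (eps * size w) =
    ((-1) ^+ eps) ^+ tperm_length (word_perm w) :> algC.
  rewrite -exprM -signr_odd -[RHS]signr_odd !oddM.
  by rewrite -odd_perm_word_perm odd_perm_tperm_length.
have := tperm_length_add_card_porbits (word_perm w); rewrite card_ord sign.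
move: (tperm_length _) #|porbits _| => d c <-.
by rewrite !natrM !natrX scaled_ratio_exprD // pnatr_eq0 -lt0n.
Qed.
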